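(* Let $R\in\{R^L,R^C,R^V\}$ and let $\mathbf{u}$ be any utility profile. If a ballot vector $\mathbf{b}$ is a PNE of $(\mathcal{T},R,\mathbf{u})$, then for every voter $i\in N$ either $b_i=a_i$ or $b_i\in W(\mathbf{b})$.
   Context: Let $C=\{c_1,\dots,c_m\}$ be candidates and $N=\{1,\dots,n\}$ voters, each with an injective utility function $u_i:C\to\mathbb{N}$ inducing $c\succ_i c'$ iff $u_i(c)>u_i(c')$; $a_i$ is $i$'s top candidate. A ballot vector is $\mathbf{b}=(b_1,\dots,b_n)$ with $b_i\in C\cup\{\bot\}$ ($\bot$ = abstain); $(\mathbf{b}_{-i},b')$ replaces $b_i$ by $b'$. $\mathrm{sc}(c,\mathbf{b})=|\{i:b_i=c\}|$, $M(\mathbf{b})=\max_c\mathrm{sc}(c,\mathbf{b})$, $W(\mathbf{b})=\{c:\mathrm{sc}(c,\mathbf{b})=M(\mathbf{b})\}$ (equal to $C$ if all abstain). If $|W(\mathbf{b})|=1$ its element wins; otherwise: $R^L$ picks the $c_j\in W(\mathbf{b})$ with smallest index; $R^C$ picks uniformly at random from $W(\mathbf{b})$; $R^V$ picks a uniformly random voter $i\in N$ and outputs $b_i$ if $b_i\in W(\mathbf{b})$, else $i$'s most preferred candidate in $W(\mathbf{b})$. Let $p_j(\mathbf{b})$ be the probability that $c_j$ wins. Fix $0<\varepsilon<\min\{1/m,1/n\}$. In the truth-biased setting $\mathcal{T}$, voter $i$'s utility is $U_i(\mathbf{b})=\sum_jp_j(\mathbf{b})u_i(c_j)$ if $b_i\in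 C\setminus\{a_i\}$, $\sum_jp_j(\mathbf{b})u_i(c_j)+\varepsilon$ if $b_i=a_i$, and $-\infty$ if $b_i=\bot$. The game $(\mathcal{T},R,\mathbf{u})$ has players $N$ with action sets $C\cup\{\bot\}$. A PNE is a ballot vector $\mathbf{b}$ with $U_i(\mathbf{b})\ge U_i(\mathbf{b}_{-i},b')$ for all $i\in N$ and $b'\in C\cup\{\bot\}$. *)

From mathcomp Require Import all_boot all_order all_algebra.
Set Implicit Arguments. Unset Strict Implicit. Unset Printing Implicit Defensive.
Import Order.TTheory GRing.Theory Num.Theory.
Local Open Scope ring_scope.

(* Candidates are 'I_m (c_j has index j), voters are 'I_n.
   A ballot is an option 'I_m, where None stands for abstention (bot). *)
Definition ballots (n m : nat) := 'I_n -> option 'I_m.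

Definition profile (n m : nat) := 'I_n -> 'I_m -> nat.

Definition upd n m (b : ballots n m) (i : 'I_n) (b' : option 'I_m) : ballots n m :=
  fun j => if j == i then b' else b j.

Definition sc n m (b : ballots n m) (c : 'I_m) : nat := #|[set j | b j == Some c]|.
Definition Mx n m (b : ballots n m) : nat := (\max_(c : 'I_m) sc b c)%N.
(* W(b); equals the whole candidate set when everybody abstains *)
Definition W n m (b : ballots n m) : {set 'I_m} := [set c | sc b c == Mx b].

Definition is_top n m (u : profile n m) (i : 'I_n) (c : 'I_m) : bool :=
  [forall c', (u i c' <= u i c)%N].
Definition is_top_in n m (u : profile n m) (i : 'I_n) (S : {set 'I_m}) (c : 'I_m) : bool :=
  (c \in S) && [forall c' in S, (u i c' <= u i c)%N].

Inductive rule := RL | RC | RV.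

Definition winprob n m (R : rule) (u : profile n m) (b : ballots n m) (j : 'I_m) : rat :=
  if #|W b| == 1%N then (j \in W b)%:R else
  match R with
  | RL => ((j \in W b) && [forall k in W b, (j <= k)%N])%:R
  | RC => (j \in W b)%:R / #|W b|%:R
  | RV => #|[set i : 'I_n | if b i is Some c then
                              (if c \in W b then c == j else is_top_in u i (W b) j)
                            else is_top_in u i (W b) j]|%:R / n%:R
  end.

(* U_i(b) in the truth-biased setting; None stands for -infinity *)
Definition Util n m (R : rule) (u : profile n m) (eps : rat) (b : ballots n m) (i : 'I_n)
  : option rat :=
  match b i with
  | None => None
  | Some c => Some (\sum_(j : 'I_m) winprob R u b j * (u i j)%:R
                    + (if is_top u i c then eps else 0))
  end.

Definition ext_le (x y : option rat) : bool :=
  match x, y with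
  | None, _ => true
  | Some _, None => false
  | Some a, Some b => a <= b
  end.

Definition is_PNE n m (R : rule) (u : profile n m) (eps : rat) (b : ballots n m) : Prop :=
  forall (i : 'I_n) (b' : option 'I_m), ext_le (Util R u eps (upd b i b') i) (Util R u eps b i).

From mathcomp Require Import all_boot all_order all_algebra.
From mathcomp Require Import lra.
Import Order.TTheory GRing.Theory Num.Theory.
Set Implicit Arguments. Unset Strict Implicit. Unset Printing Implicit Defensive.
Local Open Scope ring_scope.

(* Suppose voter i votes for c, which is neither her top candidate a nor a
   current winner, and let her switch to a.  Since c carries no weight in
   W(b), no candidate j <> a gains winning probability: either W is unchanged
   (or only gains a), so every rule gives j at most its old chance, or j drops
   out of W altogether.  The probabilities still sum to 1, so the lost mass
   goes to a, the candidate i likes best, and her expected utility does not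
   decrease; on top of that she collects the truth bonus eps > 0, so b is not
   an equilibrium.  Abstaining is worth -infinity, so it is never a best
   response either. *)

Lemma sum_indicator (m : nat) (P : pred 'I_m) :
  \sum_(j : 'I_m) ((P j)%:R : rat) = #|P|%:R.
Proof.
rewrite -natr_sum -sum1_card; congr _%:R.
by rewrite [RHS]big_mkcond; apply: eq_bigr => j _; rewrite unfold_in; case: (P j).
Qed.

Section TopIn.

Variables (n m : nat) (u : profile n m) (k : 'I_n).
Hypothesis u_inj : injective (u k).

Lemma is_top_in_unique (S : {set 'I_m}) j1 j2 :
  is_top_in u k S j1 -> is_top_in u k S j2 -> j1 = j2.
Proof.
move=> /andP[h1 /forall_inP le1] /andP[h2 /forall_inP le2].
by apply: u_inj; apply/eqP; rewrite eqn_leq le1 // le2.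
Qed.

Lemma is_top_in_pred1 (S : {set 'I_m}) c0 :
  c0 \in S -> exists j0, forall j, is_top_in u k S j = (j == j0).
Proof.
move=> Sc0; have [j0 Sj0 j0_max] := @arg_maxnP _ c0 (mem S) (u k) Sc0.
have top_j0 : is_top_in u k S j0 by apply/andP; split=> //; apply/forall_inP.
by exists j0 => j; apply/idP/eqP => [/is_top_in_unique/(_ top_j0) | ->].
Qed.

End TopIn.

Lemma sc_le_Mx n m (b : ballots n m) c : (sc b c <= Mx b)%N.
Proof. exact: (@leq_bigmax _ (sc b)). Qed.

Section Scores.

Variables (n m : nat) (b : ballots n m).

Lemma W_nonempty : (0 < m)%N -> exists c, c \in W b.
Proof.
move=> m_gt0; have [c Mc] := @bigop.eq_bigmax _ (sc b) (ltac:(by rewrite card_ord)).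
by exists c; rewrite inE /Mx Mc.
Qed.

Variables (i : 'I_n) (c a : 'I_m).
Hypotheses (bi_c : b i = Some c) (c_neq_a : c != a).
Let b' := upd b i (Some a).

Lemma sc_upd_new : sc b' a = (sc b a).+1.
Proof.
rewrite /sc (_ : [set j | b' j == Some a] = i |: [set j | b j == Some a]).
  by rewrite cardsU1 inE bi_c (inj_eq (@Some_inj _)) (negbTE c_neq_a).
by apply/setP => j; rewrite !inE /b' /upd; case: (eqVneq j i) => [->|]; rewrite ?eqxx.
Qed.

Lemma sc_upd_le d : d != a -> (sc b' d <= sc b d)%N.
Proof.
move=> d_neq_a; apply/subset_leq_card/subsetP => j.
rewrite !inE /b' /upd; case: (eqVneq j i) => // _.
by rewrite (inj_eq (@Some_inj _)) eq_sym (negbTE d_neq_a).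
Qed.

Lemma sc_upd_other d : d != a -> d != c -> sc b' d = sc b d.
Proof.
move=> d_neq_a d_neq_c; apply: eq_card => j; rewrite !inE /b' /upd.
case: (eqVneq j i) => // ->.
by rewrite bi_c !(inj_eq (@Some_inj _)) ![_ == d]eq_sym (negbTE d_neq_a) (negbTE d_neq_c).
Qed.

Hypotheses (m_gt0 : (0 < m)%N) (c_notin_W : c \notin W b).

(* As soon as some j <> a still wins after the switch, the top score is
   unchanged, and W only possibly loses c (which was not in it) and gains a. *)
Lemma W_upd_loser j : j != a -> j \in W b' ->
  [/\ a \notin W b, W b \subset W b' & forall d, d \in W b' -> d != a -> d \in W b].
Proof.
move=> j_neq_a /[dup] W'j; rewrite inE => /eqP Mj.
have Mx_le : (Mx b' <= Mx b)%N by rewrite -Mj (leq_trans (sc_upd_le j_neq_a)) ?sc_le_Mx.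
have [c0 Wc0] := W_nonempty m_gt0.
have c0_neq_c : c0 != c by apply: contraNneq c_notin_W => <-.
have Mx_ge : (Mx b <= Mx b')%N.
  move: Wc0; rewrite inE => /eqP <-; have [->|c0_neq_a] := eqVneq c0 a.
    by rewrite (leq_trans (leqnSn _)) // -sc_upd_new sc_le_Mx.
  by rewrite -(sc_upd_other c0_neq_a c0_neq_c) sc_le_Mx.
have Mx_eq : Mx b' = Mx b by apply/eqP; rewrite eqn_leq Mx_le Mx_ge.
have a_notin_W : a \notin W b.
  by rewrite inE -Mx_eq; apply/eqP => Ma; have := sc_le_Mx b' a; rewrite sc_upd_new Ma ltnn.
split=> // [|d]; first apply/subsetP => d Wd.
  have d_neq_c : d != c by apply: contraNneq c_notin_W => <-.
  have d_neq_a : d != a by apply: contraNneq a_notin_W => <-.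
  by move: Wd; rewrite !inE (sc_upd_other d_neq_a d_neq_c) Mx_eq.
rewrite inE => /eqP Md d_neq_a.
by rewrite inE eqn_leq sc_le_Mx -Mx_eq -Md sc_upd_le.
Qed.

End Scores.

Section WinProb.

Variables (n m : nat) (R : rule) (u : profile n m).
Hypotheses (n_gt0 : (0 < n)%N) (m_gt0 : (0 < m)%N).

(* Under R^V: voter k, when drawn, makes j the winner. *)
Definition rv_choice (b : ballots n m) (k : 'I_n) (j : 'I_m) : bool :=
  if b k is Some c then (if c \in W b then c == j else is_top_in u k (W b) j)
  else is_top_in u k (W b) j.

Lemma rv_choice_W b k j : rv_choice b k j -> j \in W b.
Proof.
rewrite /rv_choice; case: (b k) => [c|]; last by case/andP.
by case: ifP => [Wc /eqP <- // | _ /andP[]].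
Qed.

Lemma rv_choice_pred1 b k : injective (u k) ->
  exists j0, forall j, rv_choice b k j = (j == j0).
Proof.
move=> u_inj; have [c0 Wc0] := W_nonempty b m_gt0.
rewrite /rv_choice; case: (b k) => [c|]; last exact: is_top_in_pred1 Wc0.
case: (c \in W b); last exact: is_top_in_pred1 Wc0.
by exists c => j; rewrite eq_sym.
Qed.

Lemma winprob_single b j : #|W b| == 1%N -> winprob R u b j = (j \in W b)%:R.
Proof. by rewrite /winprob => ->. Qed.

Lemma winprob_RL b j : #|W b| != 1%N ->
  winprob RL u b j = ((j \in W b) && [forall k in W b, (j <= k)%N])%:R.
Proof. by rewrite /winprob => /negbTE ->. Qed.

Lemma winprob_RC b j : #|W b| != 1%N ->
  winprob RC u b j = (j \in W b)%:R / #|W b|%:R.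
Proof. by rewrite /winprob => /negbTE ->. Qed.

Lemma winprob_RV b j : #|W b| != 1%N ->
  winprob RV u b j = #|[set k | rv_choice b k j]|%:R / n%:R.
Proof. by rewrite /winprob => /negbTE ->. Qed.

Lemma winprob_ge0 b j : 0 <= winprob R u b j.
Proof. by rewrite /winprob; case: ifP => // _; case: R => //; rewrite divr_ge0. Qed.

Lemma winprob_le1 b j : winprob R u b j <= 1.
Proof.
rewrite /winprob; case: ifP => _; first by rewrite lern1 leq_b1.
have [c0 Wc0] := W_nonempty b m_gt0.
have W_gt0 : (0 < #|W b|)%N by apply/card_gt0P; exists c0.
case: R; first by rewrite lern1 leq_b1.
- by rewrite ler_pdivrMr ?ltr0n // mul1r ler_nat; case: (_ \in _).
- by rewrite ler_pdivrMr ?ltr0n // mul1r ler_nat (leq_trans (max_card _)) ?card_ord.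
Qed.

Lemma winprob_notin_W b j : j \notin W b -> winprob R u b j = 0.
Proof.
move=> Wj; rewrite /winprob (negbTE Wj); case: ifP => // _; case: R => //.
  by rewrite mul0r.
suff -> : [set k | rv_choice b k j] = set0 by rewrite cards0 mul0r.
by apply/setP => k; rewrite !inE; apply: contraNF Wj => /rv_choice_W.
Qed.

Lemma winprob_sum1 b : (forall k, injective (u k)) -> \sum_j winprob R u b j = 1.
Proof.
move=> u_inj; have [c0 Wc0] := W_nonempty b m_gt0.
have [W1|W_neq1] := eqVneq #|W b| 1%N.
  by under eq_bigr do rewrite winprob_single ?W1 //; rewrite (sum_indicator (mem (W b))) W1.
have W_neq0 : #|W b|%:R != 0 :> rat by rewrite pnatr_eq0 -lt0n; apply/card_gt0P; exists c0.
case: R.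
- under eq_bigr do rewrite winprob_RL //; rewrite sum_indicator.
  have [j0 Wj0 j0_min] := @arg_minnP _ c0 (fun x => x \in W b) val Wc0.
  rewrite (@eq_card1 _ j0) // => j; rewrite unfold_in; apply/idP/eqP => [|->].
    by case/andP => Wj /forall_inP j_min; apply/val_inj/eqP; rewrite eqn_leq j_min ?j0_min.
  by rewrite Wj0; apply/forall_inP.
- under eq_bigr do rewrite winprob_RC //.
  by rewrite -mulr_suml (sum_indicator (mem (W b))) divff.
- under eq_bigr do rewrite winprob_RV //; rewrite -mulr_suml -natr_sum.
  suff -> : (\sum_(j : 'I_m) #|[set k | rv_choice b k j]| = n)%N.
    by rewrite divff // pnatr_eq0 -lt0n.
  under eq_bigr do rewrite -sum1dep_card big_mkcond /=.
  rewrite exchange_big /= -[n in RHS]card_ord -sum1_card; apply: eq_bigr => k _.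
  have [j0 choice_j0] := rv_choice_pred1 b (u_inj k).
  rewrite -big_mkcond sum1dep_card (_ : [set j | rv_choice b k j] = [set j0]) ?cards1 //.
  by apply/setP => j; rewrite !inE choice_j0.
Qed.

Lemma is_top_in_subset k (S S' : {set 'I_m}) j :
  S \subset S' -> j \in S -> is_top_in u k S' j -> is_top_in u k S j.
Proof.
move=> sSS' Sj /andP[_ /forall_inP j_max]; rewrite /is_top_in Sj.
by apply/forall_inP => x /(subsetP sSS'); apply: j_max.
Qed.

Variables (b : ballots n m) (i : 'I_n) (c a : 'I_m).
Hypotheses (bi_c : b i = Some c) (c_notin_W : c \notin W b) (c_neq_a : c != a).
Let b' := upd b i (Some a).

Lemma winprob_upd_loser_le j : j != a -> winprob R u b' j <= winprob R u b j.
Proof.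
move=> j_neq_a; have [W'j|W'j] := boolP (j \in W b'); last first.
  by rewrite winprob_notin_W ?winprob_ge0.
have [a_notin_W sWW' W'_sub] := W_upd_loser bi_c c_neq_a m_gt0 c_notin_W j_neq_a W'j.
have Wj : j \in W b by apply: W'_sub.
have [W1|W_neq1] := eqVneq #|W b| 1%N.
  by rewrite [winprob R u b j]winprob_single ?W1 // Wj winprob_le1.
have W_gt1 : (1 < #|W b|)%N by rewrite ltn_neqAle eq_sym W_neq1 card_gt0; apply/set0Pn; exists j.
have W'_neq1 : #|W b'| != 1%N by rewrite neq_ltn (leq_trans W_gt1) ?subset_leq_card ?orbT.
case: R.
- rewrite !winprob_RL // ler_nat Wj; case/boolP: (_ && _) => // /andP[_ /forall_inP j_min].
  by rewrite (_ : [forall _ in _, _] = true) //; apply/forall_inP => k /(subsetP sWW'); apply: j_min.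
- have W_gt0 : (0 < #|W b|)%N by rewrite ltnW.
  by rewrite !winprob_RC // W'j Wj !mul1r lef_pV2 ?posrE ?ltr0n ?ler_nat ?subset_leq_card
    // (leq_trans W_gt0) ?subset_leq_card.
- rewrite !winprob_RV // ler_pM2r ?invr_gt0 ?ltr0n // ler_nat.
  apply/subset_leq_card/subsetP => k; rewrite !inE /rv_choice {1}/b' /upd.
  case: (eqVneq k i) => [->|_].
    rewrite bi_c (negbTE c_notin_W); case: ifP => [_ /eqP a_eq_j|_].
      by rewrite a_eq_j eqxx in j_neq_a.
    exact: is_top_in_subset.
  case: (b k) => [c'|]; last exact: is_top_in_subset.
  case: ifP => [_ /eqP -> | W'c']; first by rewrite Wj eqxx.
  rewrite ifF; first exact: is_top_in_subset.
  by apply: contraFF W'c' => /(subsetP sWW').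
Qed.

Definition expected_utility (b : ballots n m) (k : 'I_n) : rat :=
  \sum_j winprob R u b j * (u k j)%:R.

Lemma expected_utility_upd_top : (forall k, injective (u k)) ->
  (forall j, (u i j <= u i a)%N) -> expected_utility b i <= expected_utility b' i.
Proof.
move=> u_inj a_top; rewrite -subr_ge0 -sumrB.
(* Both distributions have total mass 1, so each term may be measured against u_i(a). *)
have mass_moved : \sum_j (winprob R u b' j - winprob R u b j) * (u i a)%:R = 0.
  by rewrite -mulr_suml sumrB !winprob_sum1 // subrr mul0r.
rewrite -{1}mass_moved; apply: ler_sum => j _; rewrite -mulrBl.
have [->|j_neq_a] := eqVneq j a => //.
by rewrite ler_wnM2l ?ler_nat // subr_le0 winprob_upd_loser_le.
Qed.

End WinProb.

Theorem proposition2 (n m : nat) (R : rule) (u : profile n m) (eps : rat)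
  (hn : (0 < n)%N) (hm : (0 < m)%N)
  (hinj : forall i : 'I_n, injective (u i))
  (heps0 : 0 < eps) (heps1 : eps < m%:R^-1) (heps2 : eps < n%:R^-1)
  (b : ballots n m) :
  is_PNE R u eps b ->
  forall i : 'I_n, exists c : 'I_m, b i = Some c /\ (is_top u i c \/ c \in W b).
Proof.
move=> pne i; have upd_i x : upd b i x i = x by rewrite /upd eqxx.
case bi: (b i) => [c|]; last by have := pne i (Some (Ordinal hm)); rewrite /Util upd_i bi.
exists c; split=> //; apply/orP; apply: contraT; rewrite negb_or => /andP[c_not_top c_notin_W].
have [a _ a_max] := @arg_maxnP _ (Ordinal hm) xpredT (u i) isT.
have a_top : is_top u i a by apply/forallP => j; apply: a_max.
have c_neq_a : c != a by apply: contraNneq c_not_top => ->.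
have := pne i (Some a); rewrite /Util upd_i bi a_top (negbTE c_not_top) /= addr0.
have := expected_utility_upd_top R hn hm bi c_notin_W c_neq_a hinj (fun j => a_max j isT).
rewrite /expected_utility; lra.
Qed.
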